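(* Let $G$ be a connected cubic graph and let $\mathfrak{T}$ be a spanning tree of $G$ produced by the following algorithm. Fix an indexing $w_1,\dots,w_n$ of $V(G)$ and a root $u\in V(G)$. Let $S_0=\{u\}$ and, for $i\geq 1$, let $S_i$ be the set of vertices at distance exactly $i$ from $u$. Delete every edge of $G$ with both endpoints in the same set $S_i$. Whenever two vertices $w_k,w_s\in S_i$ have a common neighbor $x\in S_{i+1}$, where $w_k$ precedes $w_s$ in the order comparing first by degree and then by index, delete the edge $w_kx$ (so each $x\in S_{i+1}$ keeps exactly one edge to $S_i$). Let $n_3$ denote the number of vertices of degree $3$ in $\mathfrak{T}$. Then $Z(\mathfrak{T})\leq n_3+2$.
   Context: Zero forcing: color each vertex of a graph $H$ black or white; if a black vertex has exactly one white neighbor, that neighbor is recolored black. A set $Z\subseteq V(H)$ is a zero forcing set if starting with exactly $Z$ black and applying this rule repeatedly makes all vertices black; the zero forcing number $Z(H)$ is the minimum size of a zero forcing set. A cubic graph is a $3$-regular simple graph. *)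

From mathcomp Require Import all_boot.
Set Implicit Arguments. Unset Strict Implicit. Unset Printing Implicit Defensive.

Section Defs.
Variable V : finType.
Implicit Types (e : rel V) (B : {set V}).

Definition force_step e B : {set V} :=
  B :|: [set y | [exists x, [&& x \in B, e x y, y \notin B &
                    [forall z, (e x z && (z \notin B)) ==> (z == y)]]]].

(* closure under the rule (|V| rounds suffice) *)
Definition force_closure e B : {set V} := iter #|V| (force_step e) B.

Definition zero_forcing_set e B : bool := force_closure e B == [set: V].

Definition zero_forcing_number e : nat :=
  #|[arg min_(B < [set: V] | zero_forcing_set e B) #|B|]|.

Fixpoint ball e (u : V) (k : nat) : {set V} :=
  match k with
  | 0 => [set u]
  | k'.+1 => ball e u k' :|: [set y | [exists x in ball e u k', e x y]]
  end.

(* distance from u (the least k with v in the ball of radius k; for a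
   connected graph this is the graph distance) *)
Definition dist e (u v : V) : nat := find (fun k => v \in ball e u k) (iota 0 #|V|).

Definition deg e (v : V) : nat := #|[set w | e v w]|.

End Defs.

Section Tree.
Variable n : nat.
Implicit Types (e : rel 'I_n).

Definition layer_free e (u : 'I_n) : rel 'I_n :=
  fun x y => e x y && (dist e u x != dist e u y).

Definition prec e (u : 'I_n) (a b : 'I_n) : bool :=
  (deg (layer_free e u) a < deg (layer_free e u) b) ||
  ((deg (layer_free e u) a == deg (layer_free e u) b) && (val a < val b)).

(* y is the kept parent of x: y in S_i, x in S_{i+1}, xy in G, and no other
   neighbour c of x in S_i is bigger than y in the order (all edges w_k x
   with w_k preceding another neighbour w_s are deleted) *)
Definition parent_edge e (u : 'I_n) (x y : 'I_n) : bool :=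
  [&& e x y, dist e u x == (dist e u y).+1 &
      [forall c, (e x c && (dist e u c == dist e u y)) ==> ~~ prec e u y c]].

Definition bfs_tree e (u : 'I_n) : rel 'I_n :=
  fun x y => parent_edge e u x y || parent_edge e u y x.

End Tree.

From mathcomp Require Import all_boot.
From mathcomp Require Import zify.
Set Implicit Arguments. Unset Strict Implicit. Unset Printing Implicit Defensive.

(* Every vertex x other than the root has a kept parent p(x) one layer closer
   to the root, so the kept edges form a rooted spanning tree T.  Colour the
   root and, for each vertex p, all children of p but one.  Layer by layer,
   once p is black its parent and all its children but one are black, so p
   forces the last child: this is a zero forcing set of T.  A non-root vertex
   with c children has T-degree c + 1 <= 3, so it contributes
   c - 1 <= [deg_T = 3] vertices; the root contributes c - 1 <= 1 + [deg_T = 3]. *)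

Lemma iter_extensive_fixed (V : finType) (f : {set V} -> {set V}) (B : {set V}) :
  (forall A : {set V}, A \subset f A) -> f (iter #|V| f B) = iter #|V| f B.
Proof.
move=> f_ext.
have fixed_or_large k : f (iter k f B) = iter k f B \/ k <= #|iter k f B|.
  elim: k => [|k [fixed|large]]; [by right | by left; rewrite iterS fixed |].
  have [fixed|not_fixed] := eqVneq (f (iter k f B)) (iter k f B).
    by left; rewrite iterS fixed.
  right; apply: leq_ltn_trans large (proper_card _).
  by rewrite properEneq eq_sym not_fixed f_ext.
have [//|large] := fixed_or_large #|V|.
have -> : iter #|V| f B = [set: V] by apply/eqP; rewrite eqEcard subsetT cardsT.
by apply/eqP; rewrite eqEsubset subsetT f_ext.
Qed.

Lemma sum_nat_of_bool (T : finType) (P : pred T) :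
  \sum_(x : T) P x = #|[set x | P x]|.
Proof. by rewrite -sum1dep_card [RHS]big_mkcond; apply: eq_bigr => x _; case: (P x). Qed.

Lemma leq_card_bigcup (I T : finType) (F : I -> {set T}) :
  #|\bigcup_i F i| <= \sum_i #|F i|.
Proof.
apply: (big_ind2 (fun (A : {set T}) k => #|A| <= k)) => [|A a B b leA leB|//].
  by rewrite cards0.
exact: leq_trans (leq_card_setU A B) (leq_add leA leB).
Qed.

Section ZeroForcing.
Variables (V : finType) (e : rel V).

Lemma subset_force_closure (B : {set V}) : B \subset force_closure e B.
Proof.
rewrite /force_closure; elim: #|V| => [|k IH] /=; first exact: subxx.
exact: subset_trans IH (subsetUl _ _).
Qed.

Lemma force_closure_force (B : {set V}) x y :
  x \in force_closure e B -> e x y ->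
  (forall z, e x z -> z != y -> z \in force_closure e B) ->
  y \in force_closure e B.
Proof.
set C := force_closure e B => xC exy others_black.
have fixed : force_step e C = C.
  by apply: iter_extensive_fixed => A; apply: subsetUl.
rewrite -fixed /force_step in_setU inE; have [//|yC] /= := boolP (y \in C).
apply/existsP; exists x; rewrite xC exy; apply/forallP => z.
apply/implyP => /andP[exz zC]; apply: contraNT zC => zy.
exact: others_black.
Qed.

Lemma zero_forcing_number_le (B : {set V}) :
  zero_forcing_set e B -> zero_forcing_number e <= #|B|.
Proof.
have zfT : zero_forcing_set e [set: V].
  by rewrite /zero_forcing_set -subTset subset_force_closure.
rewrite /zero_forcing_number; case: arg_minnP => // B0 _; exact.
Qed.

End ZeroForcing.

Lemma deg_subrel (V : finType) (e e' : rel V) (v : V) :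
  subrel e' e -> deg e' v <= deg e v.
Proof.
by move=> sub; apply: subset_leq_card; apply/subsetP => w; rewrite !inE; apply: sub.
Qed.

Section Distance.
Variables (V : finType) (e : rel V) (u : V).

Lemma ball_step k y z : y \in ball e u k -> e y z -> z \in ball e u k.+1.
Proof.
move=> yk eyz; rewrite /= in_setU inE; apply/orP; right.
by apply/existsP; exists y; rewrite yk.
Qed.

Lemma path_last_ball x p k :
  x \in ball e u k -> path e x p -> last x p \in ball e u (k + size p).
Proof.
elim: p x k => [|y p IH] x k /=; first by rewrite addn0.
by move=> xk /andP[exy py]; rewrite addnS -addSn; apply: IH py; apply: ball_step exy.
Qed.

Lemma connect_ball x : connect e u x -> exists2 k, k < #|V| & x \in ball e u k.
Proof.
case/connectP => p + ->; case/shortenP => q uq uniq_q _.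
exists (size q); last by rewrite -[size q]add0n path_last_ball //= inE.
by have := max_card (mem (u :: q)); rewrite (card_uniqP uniq_q).
Qed.

Lemma dist_le x k : x \in ball e u k -> dist e u x <= k.
Proof.
move=> xk; have [k_small|k_large] := ltnP k #|V|; last first.
  by apply: leq_trans k_large; rewrite -[X in _ <= X](size_iota 0) find_size.
rewrite leqNgt; apply/negP => /(before_find 0).
by rewrite nth_iota // add0n xk.
Qed.

Lemma mem_ball_dist x : connect e u x -> x \in ball e u (dist e u x).
Proof.
case/connect_ball => k k_small xk.
have has_ball : has (fun k => x \in ball e u k) (iota 0 #|V|).
  by apply/hasP; exists k; rewrite // mem_iota add0n.
have := nth_find 0 has_ball; rewrite nth_iota ?add0n //.
by rewrite -[X in _ < X](size_iota 0) -has_find.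
Qed.

Lemma dist_adj y z : connect e u y -> e y z -> dist e u z <= (dist e u y).+1.
Proof. by move=> /mem_ball_dist yb eyz; apply: dist_le; apply: ball_step eyz. Qed.

Lemma exists_closer_neighbour x : symmetric e -> connect e u x -> x != u ->
  exists2 z, e x z & dist e u x = (dist e u z).+1.
Proof.
move=> e_sym ux xu; have := mem_ball_dist ux.
case dx: (dist e u x) => [|d]; first by rewrite inE (negbTE xu).
rewrite /= in_setU inE => /orP[xd|/existsP[z /andP[zd ezx]]].
  by have := dist_le xd; rewrite dx ltnn.
have xz : e x z by rewrite e_sym.
exists z => //; apply/eqP; rewrite eqSS eqn_leq dist_le // andbT -ltnS -dx.
exact: dist_adj (connect_trans ux (connect1 xz)) ezx.
Qed.

End Distance.

Section BfsTree.
Variables (n : nat) (e : rel 'I_n) (u : 'I_n).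
Hypotheses (e_sym : symmetric e) (conn : forall v, connect e u v).

Local Notation T := (bfs_tree e u).

Definition prec_rank (c : 'I_n) := deg (layer_free e u) c * n + val c.

Lemma prec_rank_lt a b : prec e u a b -> prec_rank a < prec_rank b.
Proof.
rewrite /prec /prec_rank => /orP[lt_deg|/andP[/eqP-> lt_val]]; last by rewrite ltn_add2l.
apply: leq_trans (leq_addr (val b) _); apply: leq_trans (leq_mul lt_deg (leqnn n)).
by rewrite mulSn addnC ltn_add2r ltn_ord.
Qed.

Lemma parent_edge_adj x p : parent_edge e u x p -> e x p.
Proof. by case/and3P. Qed.

Lemma parent_edge_dist x p : parent_edge e u x p -> dist e u x = (dist e u p).+1.
Proof. by case/and3P => _ /eqP. Qed.

Lemma bfs_tree_adj : subrel T e.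
Proof. by move=> x y /orP[/parent_edge_adj // | /parent_edge_adj]; rewrite e_sym. Qed.

Lemma exists_parent_edge x : x != u -> exists p, parent_edge e u x p.
Proof.
move=> xu; have [z xz dx] := exists_closer_neighbour e_sym (conn x) xu.
pose A := [set c | e x c & dist e u c == dist e u z].
have zA : z \in A by rewrite inE xz eqxx.
have [p pA p_max] := arg_maxnP prec_rank zA.
have /[!inE] /andP[xp /eqP dp] : p \in A := pA.
exists p; rewrite /parent_edge xp dx dp eqxx /=; apply/forallP => c.
apply/implyP => cA; have cA' : c \in A by rewrite inE.
have le_c : prec_rank c <= prec_rank p := p_max c cA'.
by apply: contraL le_c => /prec_rank_lt; rewrite ltnNge.
Qed.

Definition children p := [set x | parent_edge e u x p].

Definition other_children p :=
  if [pick x in children p] is Some x then children p :\ x else set0.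

Definition forcing_seed := u |: \bigcup_p other_children p.

Lemma other_childrenE p : exists x0, other_children p = children p :\ x0.
Proof.
rewrite /other_children; case: pickP => [x0 _|no_child]; first by exists x0.
by exists p; apply/setP => x; rewrite in_setD1 no_child andbF inE.
Qed.

Lemma card_other_children p : #|other_children p| = #|children p|.-1.
Proof.
rewrite /other_children; case: pickP => [x0 x0_child|no_child].
  by rewrite (cardsD1 x0 (children p)) x0_child.
by rewrite cards0 eq_card0.
Qed.

Lemma forcing_seed_zero_forcing : zero_forcing_set T forcing_seed.
Proof.
set C := force_closure T forcing_seed.
have seed_black := subsetP (subset_force_closure T forcing_seed).
have other_black p x : x \in other_children p -> x \in C.
  by move=> x_other; apply: seed_black; rewrite setU1r //; apply/bigcupP; exists p.
suff dist_black k x : dist e u x = k -> x \in C.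
  by rewrite /zero_forcing_set -subTset; apply/subsetP => x _; apply: dist_black.
elim/ltn_ind: k x => k IH x dx.
have closer_black y : dist e u y < k -> y \in C := fun lt => IH _ lt y erefl.
have [->|xu] := eqVneq x u; first by apply: seed_black; rewrite setU11.
have [p xp] := exists_parent_edge xu.
have [x0 other_p] := other_childrenE p.
have [/other_black //|x_first] := boolP (x \in other_children p).
have x0x : x0 = x by move: x_first; rewrite other_p !inE xp andbT negbK eq_sym => /eqP.
apply: (force_closure_force (x := p)).
- by apply: closer_black; rewrite -dx (parent_edge_dist xp).
- by rewrite /bfs_tree xp orbT.
- move=> z /orP[pz|zp] zx.
    apply: closer_black.
    by rewrite -dx (parent_edge_dist xp) (parent_edge_dist pz); lia.
  by apply: (other_black p); rewrite other_p !inE zp x0x zx.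
Qed.

Lemma card_children_add_parent p : #|children p| + (p != u) <= deg T p.
Proof.
have [_|pu] := eqVneq p u.
  rewrite addn0; apply: subset_leq_card; apply/subsetP => z.
  by rewrite !inE /bfs_tree orbC => ->.
have [q pq] := exists_parent_edge pu.
have q_new : q \notin children p.
  apply/negP; rewrite inE => qp.
  by have := parent_edge_dist pq; rewrite (parent_edge_dist qp); lia.
have := cardsU1 q (children p); rewrite q_new add1n addn1 => <-.
apply: subset_leq_card; apply/subsetP => z; rewrite !inE /bfs_tree.
by case/orP => [/eqP->|->]; rewrite ?pq ?orbT.
Qed.

Hypothesis subcubic : forall v, deg e v <= 3.

Lemma card_children_le p : (#|children p|).-1 <= (p == u) + (deg T p == 3).
Proof.
have := card_children_add_parent p.
have := leq_trans (deg_subrel p bfs_tree_adj) (subcubic p).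
by case: eqP; case: (p == u) => /=; lia.
Qed.

Lemma card_forcing_seed : #|forcing_seed| <= #|[set v | deg T v == 3]| + 2.
Proof.
have sum_le : \sum_p #|other_children p| <= \sum_p ((p == u) + (deg T p == 3)).
  by apply: leq_sum => p _; rewrite card_other_children card_children_le.
have root_only : [set p | p == u] = [set u] by apply/setP => p; rewrite !inE.
rewrite big_split /= !sum_nat_of_bool root_only cards1 in sum_le.
have := leq_trans (leq_card_bigcup other_children) sum_le.
rewrite /forcing_seed cardsU1; have := leq_b1 (u \notin \bigcup_p other_children p).
lia.
Qed.

End BfsTree.

Theorem mainTheorem4 (n : nat) (e : rel 'I_n) (u : 'I_n)
  (e_sym : symmetric e) (e_irr : irreflexive e)
  (cubic : forall v : 'I_n, deg e v = 3)
  (conn : forall v w : 'I_n, connect e v w) :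
  zero_forcing_number (bfs_tree e u) <=
    #|[set v : 'I_n | deg (bfs_tree e u) v == 3]| + 2.
Proof.
have subcubic v : deg e v <= 3 by rewrite cubic.
apply: leq_trans (card_forcing_seed e_sym (conn u) subcubic).
exact/zero_forcing_number_le/forcing_seed_zero_forcing.
Qed.
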